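(* Let $I$ be a square-free monomial ideal of $S=K[x_1,\ldots,x_n]$ with minimal generating set $G(I)=\bigcup_{i=1}^kG_{d_i}$, where $G_{d_i}$ consists of the generators of degree $d_i$. Then $I$ is an $f$-ideal if and only if: (1) for each positive $l\in\{d_1,\ldots,d_k\}$, $$|G_l|=\tfrac12\Big(C_n^l-\Big|\bigcup_{d_i>l}\sqcap^{d_i-l}(G_{d_i})\Big|-\Big|\bigcup_{d_i<l}\sqcup^{l-d_i}(G_{d_i})\Big|\Big);$$ and (2) for each positive integer $l\notin\{d_1,\ldots,d_k\}$, $$\bigcup_{d_i>l}\sqcap^{d_i-l}(G_{d_i})=sm(S)_l\setminus\bigcup_{d_i<l}\sqcup^{l-d_i}(G_{d_i}).$$
   Context: $K$ is a field; $C_n^l$ is the binomial coefficient; $sm(S)_l$ is the set of square-free monomials of degree $l$. For a set $A$ of square-free monomials, $\sqcup(A)=\{gx_i\mid g\in A,\ x_i\nmid g,\ 1\le i\le n\}$ and $\sqcap(A)=\{h\ne1\mid h=g/x_i \text{ for some } g\in A,\ x_i\mid g\}$; $\sqcup^m$ and $\sqcap^m$ denote $m$-fold iterates. With $\sigma$ the bijection $x_{i_1}\cdots x_{i_k}\mapsto\{i_1,\ldots,i_k\}$, the facet complex $\delta_{\mathcal{F}}(I)$ has facets $\sigma(g)$, $g\in G(I)$, the Stanley–Reisner complex is $\delta_{\mathcal{N}}(I)=\{\sigma(g)\mid g\text{ square-free monomial},\ g\notin I\}$, and $I$ is an $f$-ideal if both complexes have the same $f$-vector. *)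

From HB Require Import structures.
From mathcomp Require Import all_boot all_order all_algebra.
Set Implicit Arguments. Unset Strict Implicit. Unset Printing Implicit Defensive.

(* Square-free monomials of S = K[x_1,...,x_n] are identified, via the
   bijection sigma of the paper, with subsets of 'I_n (variable x_{i+1}
   <-> index i). *)
Notation sqfmon n := {set 'I_n}.

(* A square-free monomial ideal I is determined by its minimal generating set
   G(I), which is an antichain of square-free monomials (no generator divides
   another); divisibility of square-free monomials is set inclusion. *)
Definition minimal_gens n (G : {set sqfmon n}) : Prop :=
  forall g h, g \in G -> h \in G -> g \subset h -> g = h.

Definition in_ideal n (G : {set sqfmon n}) (g : sqfmon n) : bool :=
  [exists h in G, h \subset g].

Definition Gdeg n (G : {set sqfmon n}) (l : nat) : {set sqfmon n} :=
  [set g in G | #|g| == l].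

Definition is_degree n (G : {set sqfmon n}) (l : nat) : bool :=
  [exists g in G, #|g| == l].

Definition sm n (l : nat) : {set sqfmon n} := [set g : {set 'I_n} | #|g| == l].

(* \sqcup(A) = { g x_i | g in A, x_i does not divide g } *)
Definition sqcup n (A : {set sqfmon n}) : {set sqfmon n} :=
  [set h : {set 'I_n} | [exists g in A, exists i, (i \notin g) && (h == i |: g)]].

(* \sqcap(A) = { h <> 1 | h = g / x_i, g in A, x_i divides g } *)
Definition sqcap n (A : {set sqfmon n}) : {set sqfmon n} :=
  [set h : {set 'I_n} | (h != set0) && [exists g in A, exists i, (i \in g) && (h == g :\ i)]].

(* faces of the facet complex delta_F(I): subsets of some sigma(g), g in G(I) *)
Definition facet_face n (G : {set sqfmon n}) (F : {set 'I_n}) : bool :=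
  [exists g in G, F \subset g].

(* faces of the Stanley-Reisner complex delta_N(I): sigma(g), g not in I *)
Definition sr_face n (G : {set sqfmon n}) (F : {set 'I_n}) : bool :=
  ~~ in_ideal G F.

(* f-vector entry f_{k-1} (number of faces with k vertices), k >= 1 *)
Definition fnum n (P : {set 'I_n} -> bool) (k : nat) : nat :=
  #|[set F : {set 'I_n} | (#|F| == k) && P F]|.

(* I is an f-ideal: delta_F(I) and delta_N(I) have the same f-vector
   (f_0, f_1, ..., i.e. the empty face is not counted) *)
Definition f_ideal n (G : {set sqfmon n}) : Prop :=
  forall k, 0 < k -> fnum (facet_face G) k = fnum (sr_face G) k.

Definition down_union n (G : {set sqfmon n}) (l : nat) : {set sqfmon n} :=
  \bigcup_(d < n.+1 | (l < d) && is_degree G d) iter (d - l) (@sqcap n) (Gdeg G d).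

Definition up_union n (G : {set sqfmon n}) (l : nat) : {set sqfmon n} :=
  \bigcup_(d < n.+1 | (d < l) && is_degree G d) iter (l - d) (@sqcup n) (Gdeg G d).

From HB Require Import structures.
From mathcomp Require Import all_boot all_order all_algebra zify ring.
Import GRing.Theory Num.Theory.
Set Implicit Arguments. Unset Strict Implicit. Unset Printing Implicit Defensive.

(* Iterating the shadow operators is transparent: h lies in sqcup^m(A)
   (resp. in sqcap^m(A), for h nonempty) exactly when h contains (resp. is
   contained in) a member of A with m fewer (resp. more) elements.  Hence the
   l-faces of the facet complex are G_l together with the union of the
   sqcap-shadows, while the l-faces of the Stanley-Reisner complex are the
   l-sets lying neither in G_l nor in the union of the sqcup-shadows.  Since
   G(I) is an antichain, these three families of l-sets are pairwise disjoint,
   so the two f-vectors agree in degree l iff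
   |G_l| + |down| = C(n,l) - |G_l| - |up|; when no generator has degree l
   this count identity says that down fills the complement of up. *)

Lemma natr_eq_half_diff (R : numFieldType) (a b c C : nat) : a + b + c <= C ->
  (a%:R = 2%:R^-1 * (C%:R - b%:R - c%:R) :> R)%R <-> a + b = C - (a + c).
Proof.
move=> abcC; have two_neq0 : (2%:R != 0 :> R)%R by rewrite pnatr_eq0.
split=> [aE | abE].
  have /eqP : ((a + a + b + c)%:R = C%:R :> R)%R by rewrite !natrD aE; field.
  by rewrite eqr_nat => /eqP; lia.
have -> : C = a + a + b + c by lia.
by rewrite !natrD; field.
Qed.

Lemma cardsU_disjoint (T : finType) (A B : {set T}) :
  [disjoint A & B] -> #|A :|: B| = #|A| + #|B|.
Proof. by move=> dAB; apply/eqP; rewrite (leq_card_setU A B).2. Qed.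

Section Shadows.
Variable n : nat.
Implicit Types (A G : {set {set 'I_n}}) (g h F : {set 'I_n}).

Lemma subset_card_succ g h :
  g \subset h -> #|h| = #|g|.+1 -> exists2 i, i \notin g & h = i |: g.
Proof.
move=> gh hE; have /properP[_ [i ih ig]] : g \proper h.
  by rewrite properEcard gh hE ltnSn.
exists i => //; apply/eqP; rewrite eq_sym eqEcard subUset sub1set ih gh.
by rewrite cardsU1 ig hE add1n ltnSn.
Qed.

Lemma mem_sqcup A h :
  (h \in sqcup A) = [exists g in A, (g \subset h) && (#|h| == #|g|.+1)].
Proof.
rewrite inE; apply/existsP/existsP => -[g /andP[gA]].
  case/existsP=> i /andP[ig /eqP->].
  by exists g; rewrite gA subsetUr cardsU1 ig add1n eqxx.
case/andP=> gh /eqP hE; have [i ig hE'] := subset_card_succ gh hE.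
by exists g; rewrite gA; apply/existsP; exists i; rewrite ig hE' eqxx.
Qed.

Lemma mem_sqcap A h :
  (h \in sqcap A) =
  (h != set0) && [exists g in A, (h \subset g) && (#|g| == #|h|.+1)].
Proof.
rewrite inE; congr (_ && _); apply/existsP/existsP => -[g /andP[gA]].
  case/existsP=> i /andP[ig /eqP->].
  by exists g; rewrite gA subD1set (cardsD1 i g) ig add1n eqxx.
case/andP=> hg /eqP gE; have [i ih gE'] := subset_card_succ hg gE.
by exists g; rewrite gA; apply/existsP; exists i; rewrite gE' setU11 (setU1K ih) eqxx.
Qed.

Lemma mem_iter_sqcup m A h :
  (h \in iter m (@sqcup n) A) =
  [exists g in A, (g \subset h) && (#|h| == #|g| + m)].
Proof.
elim: m h => [|m IHm] h /=.
  apply/idP/existsP => [hA | [g /and3P[gA gh /eqP hE]]].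
    by exists h; rewrite hA subxx addn0 eqxx.
  by have /eqP <- : g == h by rewrite eqEcard gh hE addn0 leqnn.
rewrite mem_sqcup; apply/existsP/existsP => [[f /andP[]] | [g /and3P[gA gh /eqP hE]]].
  rewrite IHm => /existsP[g /and3P[gA gf /eqP fE]] /andP[fh /eqP hE].
  by exists g; rewrite gA (subset_trans gf fh) hE fE addnS eqxx.
have /properP[_ [i ih ig]] : g \proper h.
  by rewrite properEcard gh hE addnS ltnS leq_addr.
have hD : #|h| = #|h :\ i|.+1 by rewrite (cardsD1 i h) ih.
exists (h :\ i); rewrite subD1set -hD eqxx !andbT IHm.
apply/existsP; exists g; rewrite gA subsetD1 gh ig /=.
by move: hE; rewrite hD addnS => -[->].
Qed.

Lemma mem_iter_sqcap m A h : h != set0 ->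
  (h \in iter m (@sqcap n) A) =
  [exists g in A, (h \subset g) && (#|g| == #|h| + m)].
Proof.
elim: m h => [|m IHm] h h0 /=.
  apply/idP/existsP => [hA | [g /and3P[gA hg /eqP gE]]].
    by exists h; rewrite hA subxx addn0 eqxx.
  by have /eqP -> : h == g by rewrite eqEcard hg gE addn0 leqnn.
rewrite mem_sqcap h0; apply/existsP/existsP => [[f /andP[]] | [g /and3P[gA hg /eqP gE]]].
  move=> fI /andP[hf /eqP fE].
  have f0 : f != set0 by rewrite -card_gt0 fE.
  move: fI; rewrite IHm // => /existsP[g /and3P[gA fg /eqP gE]].
  by exists g; rewrite gA (subset_trans hf fg) gE fE addSnnS eqxx.
have /properP[_ [i ig ih]] : h \proper g.
  by rewrite properEcard hg gE addnS ltnS leq_addr.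
have fE : #|i |: h| = #|h|.+1 by rewrite cardsU1 ih add1n.
exists (i |: h); rewrite subsetUr fE eqxx !andbT IHm; last first.
  by rewrite -card_gt0 fE.
apply/existsP; exists g; rewrite gA subUset sub1set ig hg fE.
by rewrite gE addSnnS eqxx.
Qed.

Lemma card_set_ord_ltS g : #|g| < n.+1.
Proof. by rewrite ltnS -[leqRHS]card_ord max_card. Qed.

Lemma mem_down_union G l F : 0 < l ->
  (F \in down_union G l) =
  (#|F| == l) && [exists g in G, (F \subset g) && (l < #|g|)].
Proof.
move=> l_gt0; have [-> | F0] := eqVneq F set0.
  rewrite cards0 eq_sym (gtn_eqF l_gt0); apply/bigcupP => -[d /andP[ld _]].
  by rewrite -(prednK (_ : 0 < d - l)) ?subn_gt0 // iterS mem_sqcap eqxx.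
apply/bigcupP/andP => [[d /andP[ld _]] | [/eqP cF /existsP[g /and3P[gG Fg lg]]]].
  rewrite mem_iter_sqcap // => /existsP[g /and3P[]].
  rewrite inE => /andP[gG /eqP gd] Fg /eqP gE.
  have cF : #|F| = l by move: gE; rewrite gd; lia.
  by rewrite cF; split=> //; apply/existsP; exists g; rewrite gG Fg gd.
exists (Ordinal (card_set_ord_ltS g)) => /=.
  by rewrite lg; apply/existsP; exists g; rewrite gG eqxx.
rewrite mem_iter_sqcap //; apply/existsP; exists g.
by rewrite inE gG eqxx Fg cF (subnKC (ltnW lg)) eqxx.
Qed.

Lemma mem_up_union G l F :
  (F \in up_union G l) =
  (#|F| == l) && [exists g in G, (g \subset F) && (#|g| < l)].
Proof.
apply/bigcupP/andP => [[d /andP[dl _]] | [/eqP cF /existsP[g /and3P[gG gF gl]]]].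
  rewrite mem_iter_sqcup => /existsP[g /and3P[]].
  rewrite inE => /andP[gG /eqP gd] gF /eqP FE.
  have cF : #|F| = l by move: FE; rewrite gd; lia.
  by rewrite cF; split=> //; apply/existsP; exists g; rewrite gG gF gd.
exists (Ordinal (card_set_ord_ltS g)) => /=.
  by rewrite gl; apply/existsP; exists g; rewrite gG eqxx.
rewrite mem_iter_sqcup; apply/existsP; exists g.
by rewrite inE gG eqxx gF cF (subnKC (ltnW gl)) eqxx.
Qed.

Lemma Gdeg_eq0 G l : ~~ is_degree G l -> Gdeg G l = set0.
Proof.
move=> /existsPn ndeg; apply/setP=> g; rewrite !inE.
by apply/negbTE; have := ndeg g; rewrite negb_and.
Qed.

Lemma card_sm l : #|sm n l| = 'C(n, l).
Proof. by rewrite card_draws card_ord. Qed.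

Section Level.
Variables (G : {set {set 'I_n}}) (l : nat).
Hypothesis mG : minimal_gens G.
Hypothesis l_gt0 : 0 < l.

Lemma facet_faces_level :
  [set F : {set 'I_n} | (#|F| == l) && facet_face G F] = Gdeg G l :|: down_union G l.
Proof.
apply/setP=> F; rewrite !inE mem_down_union //.
apply/andP/orP => [[/eqP cF /existsP[g /andP[gG Fg]]] | ].
  have [FE | ltFg] := eqVneq F g.
    by left; rewrite FE gG -FE cF eqxx.
  right; rewrite cF eqxx; apply/existsP; exists g; rewrite gG Fg -cF.
  by rewrite proper_card // properEneq ltFg.
case=> [/andP[FG ->] | /andP[-> /existsP[g /and3P[gG Fg _]]]].
  by split=> //; apply/existsP; exists F; rewrite FG subxx.
by split=> //; apply/existsP; exists g; rewrite gG Fg.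
Qed.

Lemma sr_faces_level :
  [set F : {set 'I_n} | (#|F| == l) && sr_face G F] = sm n l :\: (Gdeg G l :|: up_union G l).
Proof.
apply/setP=> F; rewrite !inE mem_up_union /sr_face /in_ideal.
case cF: (#|F| == l); rewrite ?andbF ?andbT //=; congr (~~ _).
apply/existsP/orP => [[g /andP[gG gF]] | [FG | /existsP[g /and3P[gG gF _]]]].
- have [gE | ltgF] := eqVneq g F; first by left; rewrite -gE.
  right; apply/existsP; exists g; rewrite gG gF -(eqP cF).
  by rewrite proper_card // properEneq ltgF.
- by exists F; rewrite FG subxx.
- by exists g; rewrite gG gF.
Qed.

Lemma disjoint_Gdeg_down_union : [disjoint Gdeg G l & down_union G l].
Proof.
rewrite -setI_eq0; apply/eqP/setP=> F; rewrite !inE mem_down_union //.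
apply/negP => /and3P[/andP[FG /eqP cF] _ /existsP[g /and3P[gG Fg lg]]].
by move: lg; rewrite -(mG FG gG Fg) cF ltnn.
Qed.

Lemma disjoint_Gdeg_up_union : [disjoint Gdeg G l & up_union G l].
Proof.
rewrite -setI_eq0; apply/eqP/setP=> F; rewrite !inE mem_up_union.
apply/negP => /and3P[/andP[FG /eqP cF] _ /existsP[g /and3P[gG gF gl]]].
by move: gl; rewrite (mG gG FG gF) cF ltnn.
Qed.

Lemma disjoint_down_up_union : [disjoint down_union G l & up_union G l].
Proof.
rewrite -setI_eq0; apply/eqP/setP=> F; rewrite !inE mem_down_union // mem_up_union.
apply/negP => /andP[/andP[/eqP cF /existsP[g /and3P[gG Fg lg]]]].
case/andP=> _ /existsP[h /and3P[hG hF hl]].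
by move: (subset_leq_card hF); rewrite (mG hG gG (subset_trans hF Fg)) cF; lia.
Qed.

Lemma up_union_sub_sm : up_union G l \subset sm n l.
Proof. by apply/subsetP=> F; rewrite mem_up_union inE => /andP[]. Qed.

Lemma down_union_sub_sm : down_union G l \subset sm n l.
Proof. by apply/subsetP=> F; rewrite mem_down_union // inE => /andP[]. Qed.

Lemma Gdeg_up_union_sub_sm : Gdeg G l :|: up_union G l \subset sm n l.
Proof.
rewrite subUset up_union_sub_sm andbT.
by apply/subsetP=> F; rewrite !inE => /andP[].
Qed.

Lemma down_union_sub_compl :
  down_union G l \subset sm n l :\: (Gdeg G l :|: up_union G l).
Proof.
move: disjoint_Gdeg_down_union disjoint_down_up_union.
rewrite -!setI_eq0 => /eqP GdownE /eqP downupE.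
by rewrite subsetD down_union_sub_sm -setI_eq0 setIUr downupE setIC GdownE setU0 eqxx.
Qed.

Lemma fnum_facet_face : fnum (facet_face G) l = #|Gdeg G l| + #|down_union G l|.
Proof. by rewrite /fnum facet_faces_level cardsU_disjoint // disjoint_Gdeg_down_union. Qed.

Lemma fnum_sr_face :
  fnum (sr_face G) l = 'C(n, l) - (#|Gdeg G l| + #|up_union G l|).
Proof.
rewrite /fnum sr_faces_level cardsD (setIidPr Gdeg_up_union_sub_sm) card_sm.
by rewrite cardsU_disjoint // disjoint_Gdeg_up_union.
Qed.

Lemma level_cards_le :
  #|Gdeg G l| + #|down_union G l| + #|up_union G l| <= 'C(n, l).
Proof.
have := subset_leq_card down_union_sub_compl.
rewrite cardsD (setIidPr Gdeg_up_union_sub_sm) card_sm.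
rewrite cardsU_disjoint ?disjoint_Gdeg_up_union //.
have := subset_leq_card Gdeg_up_union_sub_sm.
rewrite card_sm cardsU_disjoint ?disjoint_Gdeg_up_union //; lia.
Qed.

Lemma fnum_level_eq_half :
  fnum (facet_face G) l = fnum (sr_face G) l <->
  (#|Gdeg G l|%:R : rat)
  = (2%:R^-1 * ('C(n, l)%:R - #|down_union G l|%:R - #|up_union G l|%:R))%R.
Proof.
rewrite fnum_facet_face fnum_sr_face.
by split=> /natr_eq_half_diff; apply; rewrite level_cards_le.
Qed.

Lemma fnum_level_eq_compl : ~~ is_degree G l ->
  fnum (facet_face G) l = fnum (sr_face G) l <->
  down_union G l = sm n l :\: up_union G l.
Proof.
move=> ndeg; have := down_union_sub_compl; have := Gdeg_up_union_sub_sm.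
rewrite fnum_facet_face fnum_sr_face Gdeg_eq0 // cards0 !add0n set0U => upS downS.
split=> [cardE | ->]; last by rewrite cardsD (setIidPr upS) card_sm.
by apply/eqP; rewrite eqEcard downS cardsD (setIidPr upS) card_sm cardE leqnn.
Qed.

End Level.
End Shadows.

Theorem proposition6p1 (n : nat) (G : {set {set 'I_n}}) :
  minimal_gens G ->
  (f_ideal G <->
   ((forall l : nat, 0 < l -> is_degree G l ->
       (#|Gdeg G l|%:R : rat)
       = (2%:R^-1 * ('C(n, l)%:R - #|down_union G l|%:R - #|up_union G l|%:R))%R)
    /\
    (forall l : nat, 0 < l -> ~~ is_degree G l ->
       down_union G l = sm n l :\: up_union G l))).
Proof.
move=> mG; split=> [fI | [half compl] l l_gt0].
  split=> l l_gt0 => [_ | ndeg].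
    exact/(fnum_level_eq_half mG l_gt0)/fI.
  exact/(fnum_level_eq_compl mG l_gt0 ndeg)/fI.
have [deg | ndeg] := boolP (is_degree G l).
  exact/(fnum_level_eq_half mG l_gt0)/half.
exact/(fnum_level_eq_compl mG l_gt0 ndeg)/compl.
Qed.
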